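(* Let $a<0$, $b<0$, $c>0$, $d<0$ with $a+bd>0$, consider $$Z_0=\begin{cases}X=(a,0,b(y+x^2)) & z\ge0,\\ Y=(c,d,x)& z\le0,\end{cases}$$ let $\Sigma^{c+}=\{(x,y,0)\,:\,x>0,\ y<-x^2\}$, $\Sigma^s=\{(x,y,0)\,:\,x>0,\ y>-x^2\}$, and let $\varphi$ be the first return map $$\varphi(x,y)=\left(\frac{ax-\sqrt{-3a^2(x^2+4y)}}{2a},\ y+\frac{d\big(ax-\sqrt{-3a^2(x^2+4y)}\big)}{ac}\right).$$ Given $p_0=(x_0,y_0,0)\in\overline{\Sigma^{c+}}\setminus\{0\}$, let $p_1=(x_1,y_1,0)=\varphi(p_0)$ and $p_n=(x_n,y_n,0)=\varphi^n(p_0)$ whenever defined (the map being iterated only while the iterates remain in $\overline{\Sigma^{c+}}$). Then $x_1>x_0$, and if $p_n$ is defined for all $n$ then $x_n\to\infty$ as $n\to\infty$.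
   Context: $\Sigma=\{z=0\}$. The first return map $\varphi$ sends a point $p$ of $\Sigma$ to the point obtained by following the trajectory of $X$ from $p$ until it returns to $\Sigma$, and then following the trajectory of $Y$ from there until it returns to $\Sigma$; it is not iterated on points of $\overline{\Sigma^s}$. For $x\ge0$, $y\le -x^2$ the formula gives $x_1=\frac{x_0+\sqrt{3}\sqrt{-(x_0^2+4y_0)}}{2}$. *)

From Stdlib Require Import Reals.
From Coquelicot Require Import Coquelicot.
Open Scope R_scope.

(* The first return map phi of Z_0, exactly as given in the paper
   (parameters a, c, d of the vector field). Points of Sigma={z=0}
   are represented by their (x,y) coordinates. *)
Definition phi (a c d : R) (p : R * R) : R * R :=
  let x := fst p in
  let y := snd p in
  let s := a * x - sqrt (- (3 * a ^ 2 * (x ^ 2 + 4 * y))) in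
  (s / (2 * a), y + d * s / (a * c)).

Definition in_cl_Sigma_cplus (p : R * R) : Prop :=
  0 <= fst p /\ snd p <= - (fst p) ^ 2.

Definition phi_iter (a c d : R) (n : nat) (p0 : R * R) : R * R :=
  Nat.iter n (phi a c d) p0.

(* On the closure of Sigma^{c+} we have x^2 + 4 y <= -3 x^2, so the square root in phi is
   at least -3 a x and the first coordinate of phi(x, y) = x/2 + sqrt(...)/(-2a) is at least
   2x; it is positive as soon as (x, y) <> 0.  Iterating, x_n grows at least like n x_1. *)
From Stdlib Require Import Reals Lra Psatz.
From Coquelicot Require Import Coquelicot.
Open Scope R_scope.

Definition phi_radicand (a x y : R) : R := - (3 * a ^ 2 * (x ^ 2 + 4 * y)).

Lemma fst_phi (a c d x y : R) : a <> 0 ->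
  fst (phi a c d (x, y)) = x / 2 + sqrt (phi_radicand a x y) / (- 2 * a).
Proof. intros ha; unfold phi, phi_radicand; cbn; field; lra. Qed.

Lemma sqrt_phi_radicand_ge (a x y : R) :
  a < 0 -> 0 <= x -> y <= - x ^ 2 -> - 3 * a * x <= sqrt (phi_radicand a x y).
Proof.
  intros ha hx hy.
  rewrite <- (sqrt_pow2 (- 3 * a * x)) by nra.
  apply sqrt_le_1_alt; unfold phi_radicand; nra.
Qed.

Lemma fst_phi_ge_double (a c d : R) (p : R * R) :
  a < 0 -> in_cl_Sigma_cplus p -> 2 * fst p <= fst (phi a c d p).
Proof.
  destruct p as [x y]; intros ha [hx hy]; cbn in hx, hy; change (fst (x, y)) with x.
  rewrite fst_phi by lra.
  assert (hs := sqrt_phi_radicand_ge a x y ha hx hy).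
  assert (3 * x / 2 <= sqrt (phi_radicand a x y) / (- 2 * a)).
  { apply (Rmult_le_reg_r (- 2 * a)); [lra|].
    replace (sqrt (phi_radicand a x y) / (- 2 * a) * (- 2 * a))
      with (sqrt (phi_radicand a x y)) by (field; lra).
    nra. }
  lra.
Qed.

Lemma fst_phi_gt (a c d : R) (p : R * R) :
  a < 0 -> in_cl_Sigma_cplus p -> p <> (0, 0) -> fst p < fst (phi a c d p).
Proof.
  intros ha hp hnz.
  assert (hdouble := fst_phi_ge_double a c d p ha hp).
  destruct p as [x y]; destruct hp as [hx hy]; change (fst (x, y)) with x in *; cbn in hy.
  destruct (Req_dec x 0) as [-> | hx0]; [|lra].
  assert (hy0 : y < 0).
  { destruct (Req_dec y 0) as [-> | ]; [congruence | nra]. }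
  rewrite fst_phi by lra.
  assert (hrad : 0 < phi_radicand a 0 y)
    by (unfold phi_radicand; assert (0 < a * a) by nra; nra).
  assert (0 < sqrt (phi_radicand a 0 y) / (- 2 * a))
    by (apply Rdiv_lt_0_compat; [now apply sqrt_lt_R0 | lra]).
  lra.
Qed.

Lemma is_lim_seq_p_infty_of_doubling (u : nat -> R) :
  0 <= u 0%nat -> 0 < u 1%nat -> (forall n, 2 * u n <= u (S n)) ->
  is_lim_seq u p_infty.
Proof.
  intros hu0 hu1 hdouble.
  assert (hlin : forall n, INR n * u 1%nat <= u n).
  { induction n as [|[|n] IH]; [cbn; lra | cbn; lra |].
    specialize (hdouble (S n)); pose proof (pos_INR n); rewrite !S_INR in *; nra. }
  apply (is_lim_seq_le_p_loc (fun n => INR n * u 1%nat)).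
  - exists 0%nat; intros n _; apply hlin.
  - apply (is_lim_seq_mult _ _ p_infty (u 1%nat)).
    + exact is_lim_seq_INR.
    + apply is_lim_seq_const.
    + now apply is_Rbar_mult_p_infty_pos.
Qed.

Theorem mainTheorem6 (a b c d : R)
  (ha : a < 0) (hb : b < 0) (hc : c > 0) (hd : d < 0) (habd : a + b * d > 0)
  (p0 : R * R) (hp0 : in_cl_Sigma_cplus p0) (hp0nz : p0 <> (0, 0)) :
  fst (phi a c d p0) > fst p0 /\
  ((forall n : nat, in_cl_Sigma_cplus (phi_iter a c d n p0)) ->
   is_lim_seq (fun n => fst (phi_iter a c d n p0)) p_infty).
Proof.
  assert (hgt := fst_phi_gt a c d p0 ha hp0 hp0nz).
  split; [exact hgt|].
  intros hall.
  apply is_lim_seq_p_infty_of_doubling.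
  - exact (proj1 (hall 0%nat)).
  - change (0 < fst (phi a c d p0)); pose proof (proj1 hp0); lra.
  - intros n; exact (fst_phi_ge_double a c d _ ha (hall n)).
Qed.
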